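(* With $h$ as defined in the context, for every $x\in\mathbb C$ such that neither $x$ nor $x+\frac12$ belongs to $\{-1,-2,-3,\dots\}$, \[h(x)=\frac{x+1}{x+\frac 32}\,h\left(x+\frac 12\right)h(2x).\]
   Context: Let $u_n=(-1)^{s_2(n)}$, where $s_2(n)$ is the sum of the binary digits of the non-negative integer $n$ (Thue–Morse sequence with values $\pm1$). For $b,c\in\mathbb C\setminus\{-1,-2,-3,\dots\}$ let $f(b,c)=\prod_{n=1}^\infty\left(\frac{n+b}{n+c}\right)^{u_n}$ (convergent), and define $h(x)=f\left(\frac x2,\frac{x+1}{2}\right)=\prod_{n=1}^\infty\left(\frac{2n+x}{2n+1+x}\right)^{u_n}$ for $x\in\mathbb C\setminus\{-2,-3,-4,\dots\}$. *)

From Stdlib Require Import Reals ZArith ClassicalEpsilon.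
From Coquelicot Require Import Coquelicot.
Open Scope C_scope.

Fixpoint s2_pos (p : positive) : nat :=
  match p with
  | xH => 1%nat
  | xO q => s2_pos q
  | xI q => S (s2_pos q)
  end.

Definition s2 (n : nat) : nat :=
  match N.of_nat n with
  | N0 => 0%nat
  | Npos p => s2_pos p
  end.

(* z ^ (u_n), where u_n = (-1)^(s2 n) in {1,-1}. *)
Definition pow_u (n : nat) (z : C) : C :=
  if Nat.even (s2 n) then z else / z.

Fixpoint f_part (b c : C) (N : nat) : C :=
  match N with
  | O => 1
  | S M => f_part b c M * pow_u (S M) ((RtoC (INR (S M)) + b) / (RtoC (INR (S M)) + c))
  end.

Definition f (b c : C) : C :=
  epsilon (inhabits (RtoC 0))
    (fun l => filterlim (fun N => f_part b c N) eventually (locally l)).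

Definition h (x : C) : C := f (x / 2) ((x + 1) / 2).

(* Pair the factors n = 2m and n = 2m+1 of the product.  Since u_(2m) = u_m and
   u_(2m+1) = -u_m, and the n-th factor of h(y) is r(2n+y) with r(z) = z/(z+1), the
   partial product of h(2x) up to 2N+1 is r(2x+2)^(-1) = (x+3/2)/(x+1) times
   prod_(m<=N) (r(4m+2x)/r(4m+2x+2))^(u_m).  With X = 2m+x the rational identity
   r(2X)/r(2X+2) * r(X+1/2) = r(X) makes the product of this with the N-th partial
   product of h(x+1/2) equal to (x+3/2)/(x+1) times that of h(x); letting N tend to
   infinity gives the claim.  Since h is defined as a limit, the partial products must
   also be shown to converge: the paired factors are 1 + O(1/m^2), so the odd partial
   products form a Cauchy sequence, and each single even factor is 1 + O(1/m). *)

From Stdlib Require Import Reals NArith Lia Lra Classical ClassicalEpsilon.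
From Coquelicot Require Import Coquelicot.
Open Scope C_scope.

Lemma Cinv_0 : / (0 : C) = 0.
Proof.
  unfold Cinv; simpl. rewrite !Rmult_0_l, Rplus_0_l, Ropp_0, Rdiv_0_l. reflexivity.
Qed.

Lemma Cinv_inv (z : C) : / / z = z.
Proof.
  destruct (classic (z = 0)) as [-> | Hz].
  - now rewrite !Cinv_0.
  - field. exact Hz.
Qed.

Lemma Cinv_mult_distr (a b : C) : / (a * b) = / a * / b.
Proof.
  destruct (classic (a = 0)) as [-> | Ha]; [now rewrite Cmult_0_l, Cinv_0, Cmult_0_l |].
  destruct (classic (b = 0)) as [-> | Hb]; [now rewrite Cmult_0_r, Cinv_0, Cmult_0_r |].
  field. now split.
Qed.

Lemma Cmult_2_neq_0 (a : C) : a <> 0 -> 2 * a <> 0.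
Proof. intros Ha. apply Cmult_neq_0; [intro E; apply RtoC_inj in E; lra | exact Ha]. Qed.

Lemma INR_succ_ge_1 n : (1 <= INR (S n))%R.
Proof. rewrite S_INR. pose proof (pos_INR n). lra. Qed.

Lemma Cplus_neq_0_of_neq_opp (a b : C) : a <> - b -> a + b <> 0.
Proof. intros H E. apply H. replace a with (a + b - b) by ring. rewrite E. ring. Qed.

Lemma Cmod_div_le (a b : C) (e d : R) :
  (0 < d)%R -> (d <= Cmod b)%R -> (Cmod a <= e)%R -> (Cmod (a / b) <= e / d)%R.
Proof.
  intros Hd Hb Ha.
  assert (Hb0 : b <> 0) by (intro E; rewrite E, Cmod_0 in Hb; lra).
  rewrite Cmod_div by exact Hb0. unfold Rdiv.
  apply Rmult_le_compat; auto using Cmod_ge_0.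
  - apply Rlt_le, Rinv_0_lt_compat. lra.
  - apply Rinv_le_contravar; assumption.
Qed.

Lemma Cmod_mult_ge (a b : C) (d : R) :
  (0 <= d)%R -> (d <= Cmod a)%R -> (d <= Cmod b)%R -> (d * d <= Cmod (a * b))%R.
Proof. intros. rewrite Cmod_mult. apply Rmult_le_compat; assumption. Qed.

Lemma Cmod_shift_ge (y : C) (m j : R) :
  (Cmod y <= m)%R -> (0 <= j)%R -> (3 * m + j <= Cmod (4 * m + y + j))%R.
Proof.
  intros Hy Hj.
  replace (4 * m + y + j) with (RtoC (4 * m + j) + y) by (rewrite RtoC_plus, RtoC_mult; ring).
  pose proof (Cmod_triangle (RtoC (4 * m + j) + y) (- y)) as T.
  replace (RtoC (4 * m + j) + y + - y) with (RtoC (4 * m + j)) in T by ring.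
  rewrite Cmod_opp, Cmod_R in T. pose proof (Rle_abs (4 * m + j)). lra.
Qed.

Section Majorant.

Variables (u : nat -> C) (P b : nat -> R) (K : nat).
Hypothesis u_K_le : (Cmod (u K) <= P K)%R.
Hypothesis b_ge_0 : forall n, (K <= n)%nat -> (0 <= b n)%R.
Hypothesis u_step : forall n, (K <= n)%nat -> (Cmod (u (S n) - u n) <= Cmod (u n) * b n)%R.
Hypothesis P_step : forall n, (K <= n)%nat -> P (S n) = (P n * (1 + b n))%R.

Lemma Cmod_le_majorant n : (K <= n)%nat -> (Cmod (u n) <= P n)%R.
Proof.
  induction 1 as [|n Hn IH]; [exact u_K_le |].
  rewrite P_step by exact Hn.
  replace (u (S n)) with (u n + (u (S n) - u n)) by ring.
  eapply Rle_trans; [apply Cmod_triangle |].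
  pose proof (u_step n Hn). pose proof (b_ge_0 n Hn). pose proof (Cmod_ge_0 (u n)). nra.
Qed.

Lemma Cmod_sub_le_majorant n m : (K <= n <= m)%nat -> (Cmod (u m - u n) <= P m - P n)%R.
Proof.
  intros [Hn Hm]. induction Hm as [|m Hm IH].
  - replace (u n - u n) with (RtoC 0) by ring. rewrite Cmod_0. lra.
  - assert (Km : (K <= m)%nat) by lia.
    replace (u (S m) - u n) with ((u m - u n) + (u (S m) - u m)) by ring.
    eapply Rle_trans; [apply Cmod_triangle |].
    rewrite P_step by exact Km.
    pose proof (u_step m Km). pose proof (b_ge_0 m Km). pose proof (Cmod_le_majorant m Km).
    pose proof (Cmod_ge_0 (u m)). nra.
Qed.

End Majorant.

Lemma eventually_div_INR_lt (c : R) (eps : posreal) :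
  exists N, forall n, (N <= n)%nat -> (c / INR (S n) < eps)%R.
Proof.
  destruct (INR_unbounded (c / eps)) as [N HN]. exists N. intros n Hn.
  pose proof (cond_pos eps) as He.
  assert (HSn : (INR N < INR (S n))%R) by (apply lt_INR; lia).
  assert (Hc : c = (eps * (c / eps))%R) by (field; lra).
  apply Rmult_lt_reg_r with (INR (S n)); [apply lt_0_INR; lia |].
  unfold Rdiv. rewrite Rmult_assoc, Rinv_l by (apply not_0_INR; lia). nra.
Qed.

Lemma ex_lim_of_sub_le_inv (u : nat -> C) (c : R) K :
  (forall n m, (K <= n <= m)%nat -> (Cmod (u m - u n) <= c / INR (S n))%R) ->
  exists L, filterlim u eventually (locally L).
Proof.
  intros Hu. apply (@filterlim_locally_cauchy nat C_CompleteNormedModule eventually _ u).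
  intros eps.
  destruct (eventually_div_INR_lt c eps) as [N HN].
  exists (fun n => (K + N <= n)%nat). split; [now exists (K + N)%nat |].
  assert (Hball : forall p q, (K + N <= p <= q)%nat -> ball (u p) eps (u q)).
  { intros p q Hpq. apply (@norm_compat1 C_AbsRing C_NormedModule).
    eapply Rle_lt_trans; [apply Hu; lia | apply HN; lia]. }
  intros p q Hp Hq. destruct (Nat.le_ge_cases p q).
  - apply Hball. lia.
  - apply ball_sym, Hball. lia.
Qed.

Lemma filterlim_0_of_Cmod_le_inv (d : nat -> C) (c : R) K :
  (forall n, (K <= n)%nat -> (Cmod (d n) <= c / INR (S n))%R) ->
  filterlim d eventually (locally (0 : C)).
Proof.
  intros Hd.
  apply (@filterlim_locally_ball_norm C_AbsRing nat C_NormedModule eventually _ d (RtoC 0)).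
  intros eps.
  destruct (eventually_div_INR_lt c eps) as [N HN].
  exists (K + N)%nat. intros n Hn. unfold ball_norm.
  change (Cmod (d n - 0) < eps)%R. replace (d n - 0) with (d n) by ring.
  eapply Rle_lt_trans; [apply Hd; lia | apply HN; lia].
Qed.

Lemma filterlim_even_odd {U : UniformSpace} (u : nat -> U) (L : U) :
  filterlim (fun n => u (2 * S n)%nat) eventually (locally L) ->
  filterlim (fun n => u (S (2 * n))) eventually (locally L) ->
  filterlim u eventually (locally L).
Proof.
  rewrite !filterlim_locally. intros Heven Hodd eps.
  destruct (Heven eps) as [N1 H1]. destruct (Hodd eps) as [N2 H2].
  exists (2 * (N1 + N2) + 2)%nat. intros n Hn.
  destruct (Nat.Even_or_Odd n) as [[k ->] | [k ->]].
  - replace (2 * k)%nat with (2 * S (k - 1))%nat by lia. apply H1. lia.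
  - replace (2 * k + 1)%nat with (S (2 * k)) by lia. apply H2. lia.
Qed.

Lemma filterlim_Cplus (u v : nat -> C) (a b : C) :
  filterlim u eventually (locally a) -> filterlim v eventually (locally b) ->
  filterlim (fun n => u n + v n) eventually (locally (a + b)).
Proof.
  intros Hu Hv. exact (filterlim_comp_2 _ _ _ Hu Hv (filterlim_plus (K := C_AbsRing) a b)).
Qed.

(* Coquelicot gives [C] two uniform structures, the product one and the one
   induced by [Cmod] as an absolute-value ring; [filterlim_mult] uses the latter. *)
Lemma filterlim_C_AbsRing (u : nat -> C) (a : C) :
  filterlim u eventually (locally a) <->
  filterlim u eventually (@locally (AbsRing_UniformSpace C_AbsRing) a).
Proof.
  exact (iff_trans
    (@filterlim_locally_ball_norm C_AbsRing nat C_NormedModule eventually _ u a)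
    (iff_sym (@filterlim_locally_ball_norm C_AbsRing nat (AbsRing_NormedModule C_AbsRing)
                eventually _ u a))).
Qed.

Lemma filterlim_Cmult (u v : nat -> C) (a b : C) :
  filterlim u eventually (locally a) -> filterlim v eventually (locally b) ->
  filterlim (fun n => u n * v n) eventually (locally (a * b)).
Proof.
  rewrite !filterlim_C_AbsRing. intros Hu Hv.
  exact (filterlim_comp_2 _ _ _ Hu Hv (filterlim_mult a b)).
Qed.

Lemma s2_double n : s2 (2 * n) = s2 n.
Proof. unfold s2. rewrite Nnat.Nat2N.inj_double. now destruct (N.of_nat n). Qed.

Lemma s2_double_succ n : s2 (S (2 * n)) = S (s2 n).
Proof. unfold s2. rewrite Nnat.Nat2N.inj_succ_double. now destruct (N.of_nat n). Qed.

Lemma pow_u_double n z : pow_u (2 * n) z = pow_u n z.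
Proof. unfold pow_u. now rewrite s2_double. Qed.

Lemma pow_u_double_succ n z : pow_u (S (2 * n)) z = pow_u n (/ z).
Proof.
  unfold pow_u. rewrite s2_double_succ, Nat.even_succ, <- Nat.negb_even.
  destruct (Nat.even (s2 n)); simpl; [reflexivity | now rewrite Cinv_inv].
Qed.

Lemma pow_u_mult n a b : pow_u n (a * b) = pow_u n a * pow_u n b.
Proof. unfold pow_u. destruct (Nat.even (s2 n)); [reflexivity | apply Cinv_mult_distr]. Qed.

Lemma pow_u_sub_1_le n z (e : R) :
  (Cmod (z - 1) <= e)%R -> (Cmod (/ z - 1) <= e)%R -> (Cmod (pow_u n z - 1) <= e)%R.
Proof. unfold pow_u. now destruct (Nat.even (s2 n)). Qed.

Definition ratio (z : C) : C := z / (z + 1).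

Definition pair_ratio (z : C) : C := ratio z / ratio (z + 2).

Lemma pair_ratio_duplication (X : C) :
  X <> 0 -> X + 1 <> 0 -> X + 1 / 2 <> 0 -> X + 1 / 2 + 1 <> 0 ->
  pair_ratio (2 * X) * ratio (X + 1 / 2) = ratio X.
Proof.
  intros H0 H1 H2 H3.
  assert (H4 : 2 * X + 1 <> 0).
  { replace (2 * X + 1) with (2 * (X + 1 / 2)) by field. now apply Cmult_2_neq_0. }
  assert (H5 : 2 * X + 2 <> 0).
  { replace (2 * X + 2) with (2 * (X + 1)) by ring. now apply Cmult_2_neq_0. }
  assert (H6 : 2 * X + 3 <> 0).
  { replace (2 * X + 3) with (2 * (X + 1 / 2 + 1)) by field. now apply Cmult_2_neq_0. }
  unfold pair_ratio, ratio. field.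
  repeat split; auto. now replace (X * 2 + 1 + 2) with (2 * X + 3) by ring.
Qed.

Lemma ratio_sub_1_le (z : C) (d : R) :
  (0 < d)%R -> (d <= Cmod z)%R -> (d <= Cmod (z + 1))%R ->
  (Cmod (ratio z - 1) <= / d)%R /\ (Cmod (/ ratio z - 1) <= / d)%R.
Proof.
  intros Hd H0 H1.
  assert (Hz : z <> 0) by (intro E; rewrite E, Cmod_0 in H0; lra).
  assert (Hz1 : z + 1 <> 0) by (intro E; rewrite E, Cmod_0 in H1; lra).
  unfold ratio. split.
  - replace (z / (z + 1) - 1) with (- (1 / (z + 1))) by (field; exact Hz1).
    rewrite Cmod_opp, <- (Rmult_1_l (/ d)). apply Cmod_div_le; auto.
    rewrite Cmod_1. lra.
  - replace (/ (z / (z + 1)) - 1) with (1 / z) by (field; auto).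
    rewrite <- (Rmult_1_l (/ d)). apply Cmod_div_le; auto.
    rewrite Cmod_1. lra.
Qed.

Lemma pair_ratio_sub_1_le (z : C) (d : R) :
  (0 < d)%R -> (d <= Cmod z)%R -> (d <= Cmod (z + 1))%R ->
  (d <= Cmod (z + 2))%R -> (d <= Cmod (z + 3))%R ->
  (Cmod (pair_ratio z - 1) <= 2 / (d * d))%R /\ (Cmod (/ pair_ratio z - 1) <= 2 / (d * d))%R.
Proof.
  intros Hd H0 H1 H2 H3.
  assert (Hnz : forall w, (d <= Cmod w)%R -> w <> 0).
  { intros w Hw E. rewrite E, Cmod_0 in Hw. lra. }
  assert (HC2 : (Cmod 2 <= 2)%R) by (rewrite Cmod_R, Rabs_pos_eq; lra).
  assert (Hdd : (0 < d * d)%R) by nra.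
  unfold pair_ratio, ratio. split.
  - replace (z / (z + 1) / ((z + 2) / (z + 2 + 1)) - 1) with (- (2 / ((z + 1) * (z + 2)))).
    + rewrite Cmod_opp. apply Cmod_div_le; auto. apply Cmod_mult_ge; auto; lra.
    + replace (z + 2 + 1) with (z + 3) by ring. field. repeat split; auto.
  - replace (/ (z / (z + 1) / ((z + 2) / (z + 2 + 1))) - 1) with (2 / (z * (z + 3))).
    + apply Cmod_div_le; auto. apply Cmod_mult_ge; auto; lra.
    + replace (z + 2 + 1) with (z + 3) by ring. field. repeat split; auto.
Qed.

Lemma ratio_factor_sub_1_le (y : C) (m : R) k :
  (1 <= m)%R -> (Cmod y <= m)%R -> (Cmod (pow_u k (ratio (4 * m + y)) - 1) <= / (3 * m))%R.
Proof.
  intros Hm Hy.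
  pose proof (Cmod_shift_ge y m 0 Hy ltac:(lra)) as H0.
  pose proof (Cmod_shift_ge y m 1 Hy ltac:(lra)) as H1.
  rewrite Cplus_0_r in H0.
  destruct (ratio_sub_1_le (4 * m + y) (3 * m)) as [Hr Hi]; [lra .. |].
  now apply pow_u_sub_1_le.
Qed.

Lemma pair_factor_sub_1_le (y : C) (m : R) k :
  (1 <= m)%R -> (Cmod y <= m)%R ->
  (Cmod (pow_u k (pair_ratio (4 * m + y)) - 1) <= / (m * (m + 2)))%R.
Proof.
  intros Hm Hy.
  pose proof (Cmod_shift_ge y m 0 Hy ltac:(lra)) as H0.
  pose proof (Cmod_shift_ge y m 1 Hy ltac:(lra)) as H1.
  pose proof (Cmod_shift_ge y m 2 Hy ltac:(lra)) as H2.
  pose proof (Cmod_shift_ge y m 3 Hy ltac:(lra)) as H3.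
  rewrite Cplus_0_r in H0.
  destruct (pair_ratio_sub_1_le (4 * m + y) (3 * m)) as [Hr Hi]; [lra .. |].
  assert (2 / (3 * m * (3 * m)) <= / (m * (m + 2)))%R.
  { apply Rmult_le_reg_r with (9 * m * m * (m + 2))%R; [nra |].
    field_simplify; nra. }
  apply pow_u_sub_1_le; lra.
Qed.

Lemma RtoC_INR_double n : RtoC (INR (2 * n)) = 2 * INR n.
Proof. now rewrite mult_INR, RtoC_mult. Qed.

Lemma RtoC_INR_double_succ n : RtoC (INR (S (2 * n))) = 2 * INR n + 1.
Proof. now rewrite S_INR, RtoC_plus, RtoC_INR_double. Qed.

Definition hpart (y : C) (n : nat) : C := f_part (y / 2) ((y + 1) / 2) n.

(* This holds at the poles too: there both sides are [0], as Coquelicot's [/ 0] is [0]. *)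
Lemma hpart_succ y n :
  hpart y (S n) = hpart y n * pow_u (S n) (ratio (2 * INR (S n) + y)).
Proof.
  unfold hpart. cbn [f_part]. f_equal. f_equal. unfold ratio.
  set (a := 2 * RtoC (INR (S n)) + y).
  replace (RtoC (INR (S n)) + y / 2) with (a / 2) by (unfold a; field).
  replace (RtoC (INR (S n)) + (y + 1) / 2) with ((a + 1) / 2) by (unfold a; field).
  destruct (classic (a + 1 = 0)) as [Ha | Ha].
  - rewrite Ha. unfold Cdiv. now rewrite Cmult_0_l, Cinv_0, !Cmult_0_r.
  - field. exact Ha.
Qed.

Lemma hpart_even y n :
  hpart y (2 * S n) = hpart y (S (2 * n)) * pow_u (S n) (ratio (4 * INR (S n) + y)).
Proof.
  replace (2 * S n)%nat with (S (S (2 * n))) at 1 by lia.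
  rewrite hpart_succ. replace (S (S (2 * n))) with (2 * S n)%nat by lia.
  rewrite pow_u_double, RtoC_INR_double. do 3 f_equal.
  (* [ring] fails unless [RtoC (INR (S n))] is made an atom. *)
  set (r := RtoC (INR (S n))). ring.
Qed.

Lemma hpart_odd_succ y n :
  hpart y (S (2 * S n)) = hpart y (S (2 * n)) * pow_u (S n) (pair_ratio (4 * INR (S n) + y)).
Proof.
  rewrite hpart_succ, hpart_even, pow_u_double_succ, RtoC_INR_double_succ.
  unfold pair_ratio, Cdiv. rewrite pow_u_mult, <- Cmult_assoc. do 5 f_equal.
  set (r := RtoC (INR (S n))). ring.
Qed.

Lemma shift_succ_neq_0 (x : C) (Hx : forall k, x + INR (S k) <> 0) k : x + INR (S k) + 1 <> 0.
Proof. rewrite <- Cplus_assoc, <- RtoC_plus, <- S_INR. apply Hx. Qed.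

Lemma hpart_duplication (x : C)
  (Hx : forall k, x + INR (S k) <> 0) (Hx2 : forall k, x + 1 / 2 + INR (S k) <> 0) N :
  hpart (2 * x) (S (2 * N)) * hpart (x + 1 / 2) N = (x + 3 / 2) / (x + 1) * hpart x N.
Proof.
  induction N as [|N IH].
  - change (2 * 0)%nat with 0%nat. rewrite hpart_succ. unfold hpart. cbn [f_part].
    change (pow_u 1 ?z) with (/ z). rewrite INR_1.
    specialize (Hx O). specialize (Hx2 O). rewrite INR_1 in Hx, Hx2.
    assert (H2 : 2 + 2 * x <> 0).
    { replace (2 + 2 * x) with (2 * (x + 1)) by ring. now apply Cmult_2_neq_0. }
    assert (H3 : 2 + 2 * x + 1 <> 0).
    { replace (2 + 2 * x + 1) with (2 * (x + 1 / 2 + 1)) by field. now apply Cmult_2_neq_0. }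
    unfold ratio. field. cbv beta. auto.
  - rewrite hpart_odd_succ, (hpart_succ (x + 1 / 2)), (hpart_succ x).
    set (X := x + INR (S (S (2 * N)))).
    assert (HX : 2 * RtoC (INR (S N)) + x = X).
    { unfold X. replace (S (S (2 * N))) with (2 * S N)%nat by lia. rewrite RtoC_INR_double. ring. }
    replace (4 * INR (S N) + 2 * x) with (2 * X)
      by (rewrite <- HX; set (r := RtoC (INR (S N))); ring).
    replace (2 * INR (S N) + (x + 1 / 2)) with (X + 1 / 2) by (rewrite <- HX; ring).
    rewrite HX, <- (pair_ratio_duplication X), pow_u_mult.
    + set (A := pow_u (S N) (pair_ratio (2 * X))). set (B := pow_u (S N) (ratio (X + 1 / 2))).
      transitivity (hpart (2 * x) (S (2 * N)) * hpart (x + 1 / 2) N * (A * B)); [ring |].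
      rewrite IH. ring.
    + apply Hx.
    + apply shift_succ_neq_0, Hx.
    + replace (X + 1 / 2) with (x + 1 / 2 + INR (S (S (2 * N)))) by (unfold X; ring).
      apply Hx2.
    + replace (X + 1 / 2) with (x + 1 / 2 + INR (S (S (2 * N)))) by (unfold X; ring).
      apply shift_succ_neq_0, Hx2.
Qed.

(* Its consecutive ratios [1 + 1 / ((n + 1) (n + 3))] bound the paired factors of [hpart]. *)
Definition telescoping_bound (c : R) (n : nat) : R := (c * (INR (S n) / (INR (S n) + 1)))%R.

Lemma telescoping_bound_succ c n :
  telescoping_bound c (S n)
  = (telescoping_bound c n * (1 + / (INR (S n) * (INR (S n) + 2))))%R.
Proof.
  unfold telescoping_bound. rewrite (S_INR (S n)).
  pose proof (pos_INR n). rewrite S_INR. field. lra.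
Qed.

Lemma telescoping_bound_le c n : (0 <= c)%R -> (telescoping_bound c n <= c)%R.
Proof.
  intros Hc. unfold telescoping_bound. pose proof (pos_INR (S n)).
  rewrite <- (Rmult_1_r c) at 2. apply Rmult_le_compat_l; [exact Hc |].
  apply Rmult_le_reg_r with (INR (S n) + 1)%R; [lra |]. field_simplify; lra.
Qed.

Lemma telescoping_bound_gap c n : (0 <= c)%R -> (c - telescoping_bound c n <= c / INR (S n))%R.
Proof.
  intros Hc. unfold telescoping_bound.
  pose proof (INR_succ_ge_1 n) as Hn.
  replace (c - c * (INR (S n) / (INR (S n) + 1)))%R with (c / (INR (S n) + 1))%R by (field; lra).
  unfold Rdiv. apply Rmult_le_compat_l; [exact Hc |]. apply Rinv_le_contravar; lra.
Qed.

Lemma hpart_odd_bounds (y : C) : exists (c : R) (K : nat),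
  (forall n, (K <= n)%nat -> Cmod (hpart y (S (2 * n))) <= c)%R /\
  (forall n m, (K <= n <= m)%nat ->
     Cmod (hpart y (S (2 * m)) - hpart y (S (2 * n))) <= c / INR (S n))%R.
Proof.
  destruct (INR_unbounded (Cmod y)) as [K HK].
  set (G := fun n => hpart y (S (2 * n))).
  set (c := (Cmod (G K) * ((INR (S K) + 1) / INR (S K)))%R).
  set (b := fun n => (/ (INR (S n) * (INR (S n) + 2)))%R).
  assert (Hc : (0 <= c)%R).
  { pose proof (INR_succ_ge_1 K).
    apply Rmult_le_pos; [apply Cmod_ge_0 | apply Rle_mult_inv_pos; lra]. }
  assert (HK_le : (Cmod (G K) <= telescoping_bound c K)%R).
  { right. unfold telescoping_bound, c. pose proof (INR_succ_ge_1 K). field. lra. }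
  assert (Hb : forall n, (K <= n)%nat -> (0 <= b n)%R).
  { intros n _. unfold b. apply Rlt_le, Rinv_0_lt_compat. pose proof (INR_succ_ge_1 n). nra. }
  assert (Hstep : forall n, (K <= n)%nat -> (Cmod (G (S n) - G n) <= Cmod (G n) * b n)%R).
  { intros n Hn. unfold G. rewrite hpart_odd_succ.
    set (w := pow_u (S n) (pair_ratio (4 * INR (S n) + y))).
    replace (hpart y (S (2 * n)) * w - hpart y (S (2 * n)))
      with (hpart y (S (2 * n)) * (w - 1)) by ring.
    rewrite Cmod_mult. apply Rmult_le_compat_l; [apply Cmod_ge_0 |].
    apply pair_factor_sub_1_le; [apply INR_succ_ge_1 |].
    pose proof (le_INR K (S n) ltac:(lia)). lra. }
  assert (HP : forall n, (K <= n)%nat ->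
                 telescoping_bound c (S n) = (telescoping_bound c n * (1 + b n))%R)
    by (intros n _; apply telescoping_bound_succ).
  exists c, K. split.
  - intros n Hn. eapply Rle_trans; [exact (Cmod_le_majorant G _ b K HK_le Hb Hstep HP n Hn) |].
    now apply telescoping_bound_le.
  - intros n m Hnm.
    eapply Rle_trans; [exact (Cmod_sub_le_majorant G _ b K HK_le Hb Hstep HP n m Hnm) |].
    pose proof (telescoping_bound_le c m Hc). pose proof (telescoping_bound_gap c n Hc). lra.
Qed.

Lemma hpart_cvg (y : C) : exists L, filterlim (hpart y) eventually (locally L).
Proof.
  destruct (hpart_odd_bounds y) as [c [K [Hbound Hcauchy]]].
  destruct (ex_lim_of_sub_le_inv _ c K Hcauchy) as [L HL].
  exists L. apply filterlim_even_odd; [| exact HL].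
  assert (Hgap : filterlim (fun n => hpart y (2 * S n) - hpart y (S (2 * n)))
                   eventually (locally (0 : C))).
  { destruct (INR_unbounded (Cmod y)) as [K' HK'].
    apply filterlim_0_of_Cmod_le_inv with c (K + K')%nat. intros n Hn.
    rewrite hpart_even.
    set (v := pow_u (S n) (ratio (4 * INR (S n) + y))).
    replace (hpart y (S (2 * n)) * v - hpart y (S (2 * n)))
      with (hpart y (S (2 * n)) * (v - 1)) by ring.
    rewrite Cmod_mult. unfold Rdiv.
    apply Rmult_le_compat; [apply Cmod_ge_0 | apply Cmod_ge_0 | apply Hbound; lia |].
    apply Rle_trans with (/ (3 * INR (S n)))%R.
    - apply ratio_factor_sub_1_le; [apply INR_succ_ge_1 |].
      pose proof (le_INR K' (S n) ltac:(lia)). lra.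
    - pose proof (INR_succ_ge_1 n). apply Rinv_le_contravar; lra. }
  pose proof (filterlim_Cplus _ _ _ _ HL Hgap) as H. rewrite Cplus_0_r in H.
  eapply filterlim_ext; [| exact H]. intro n. simpl. ring.
Qed.

Lemma hpart_lim_h (y : C) : filterlim (hpart y) eventually (locally (h y)).
Proof.
  apply (epsilon_spec (inhabits (RtoC 0)) (fun l => filterlim (hpart y) eventually (locally l))).
  apply hpart_cvg.
Qed.

Lemma h_duplication (x : C)
  (Hx : forall k, x + INR (S k) <> 0) (Hx2 : forall k, x + 1 / 2 + INR (S k) <> 0) :
  h (2 * x) * h (x + 1 / 2) = (x + 3 / 2) / (x + 1) * h x.
Proof.
  apply (filterlim_locally_unique (F := eventually)
           (fun n => hpart (2 * x) (S (2 * n)) * hpart (x + 1 / 2) n)).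
  - apply filterlim_Cmult; [| apply hpart_lim_h].
    apply (filterlim_comp _ _ _ (fun n => S (2 * n)) (hpart (2 * x)) _ eventually).
    + apply eventually_subseq. intro n. lia.
    + apply hpart_lim_h.
  - eapply filterlim_ext; [intro n; symmetry; apply hpart_duplication; assumption |].
    apply filterlim_Cmult; [apply filterlim_const | apply hpart_lim_h].
Qed.

Theorem lemma4 (x : C)
  (hx : forall k : nat, x <> - RtoC (INR (S k)))
  (hx2 : forall k : nat, x + RtoC (1/2) <> - RtoC (INR (S k))) :
  h x = (x + 1) / (x + RtoC (3/2)) * h (x + RtoC (1/2)) * h (2 * x).
Proof.
  rewrite !RtoC_div in * by lra.
  assert (Hx : forall k, x + INR (S k) <> 0) by (intro k; apply Cplus_neq_0_of_neq_opp, hx).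
  assert (Hx2 : forall k, x + 1 / 2 + INR (S k) <> 0)
    by (intro k; apply Cplus_neq_0_of_neq_opp, hx2).
  assert (H1 : x + 1 <> 0) by (specialize (Hx O); rewrite INR_1 in Hx; exact Hx).
  (* Stated in the normal form of the side condition that [field] generates. *)
  assert (H3 : x * 2 + 3 <> 0).
  { replace (x * 2 + 3) with (2 * (x + 1 / 2 + INR 1)) by (rewrite INR_1; field).
    apply Cmult_2_neq_0, Hx2. }
  rewrite <- Cmult_assoc, (Cmult_comm (h (x + 1 / 2))), (h_duplication x Hx Hx2).
  field. cbv beta. auto.
Qed.
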